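(* Let $\beta\in(0,\tfrac12)$, let $\lambda$ be an eigenvalue of $\Delta_\beta$, and let $\theta\in\mathcal{A}_\beta$. Then $\lambda\ge\theta$.
   Context: Tree: for an integer $m\ge2$, $\mathbb{T}_m$ has vertices the root $\emptyset$ and all finite sequences $(\emptyset,a_1,\dots,a_k)$, $a_i\in\{0,\dots,m-1\}$; $|x|$ is the level, successors of $x$ are $(x,i)$, $\hat x$ is the immediate predecessor of $x\ne\emptyset$. A branch is an infinite sequence $(x_n)_{n\ge0}$ with $x_0=\emptyset$, $x_{n+1}$ a successor of $x_n$; $\lim_{x\to y}u(x)=\lim_n u(x_n)$ for a branch $y=(x_n)$. Operator: $p_\beta=\beta/(1-\beta)$ for $\beta\in(0,1)$. $\Delta_\beta u(\emptyset)=\frac1m\sum_{i=0}^{m-1}u(\emptyset,i)-u(\emptyset)$ and, for $x\ne\emptyset$, $\Delta_\beta u(x)=\big(\beta u(\hat x)+\frac{1-\beta}{m}\sum_{i=0}^{m-1}u(x,i)-u(x)\big)p_\beta^{-|x|}$. Eigenvalues: $\lambda\in\mathbb{R}$ is an eigenvalue of $\Delta_\beta$ if there is a bounded $u\not\equiv0$ with $-\Delta_\beta u=\lambda u$ on $\mathbb{T}_m$ and $\lim_{x\to y}u(x)=0$ for every branch $y$. $\mathcal{A}_\beta=\{\lambda>0:\exists v:\mathbb{T}_m\to\mathbb{R}\text{ and constants }0<c<C\text{ with } c<v<C \text{ and } \Delta_\beta v+\lambda v\le0 \text{ on }\mathbb{T}_m\}$. *)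

From HB Require Import structures.
From mathcomp Require Import all_boot all_order all_algebra.
From mathcomp Require Import all_classical all_reals all_analysis.
Set Implicit Arguments. Unset Strict Implicit. Unset Printing Implicit Defensive.
Import Order.TTheory GRing.Theory Num.Theory.
Local Open Scope classical_set_scope.
Local Open Scope ring_scope.

(* Vertices of the m-ary tree T_m: finite sequences (a_1,...,a_k) with
   a_i in {0,...,m-1}; the root is the empty sequence [::].
   The successor (x,i) is rcons x i; the level |x| is size x. *)
Definition vertex (m : nat) := seq 'I_m.

Definition parent (m : nat) (x : vertex m) : vertex m := take (size x).-1 x.

Definition pbeta (R : realType) (b : R) : R := b / (1 - b).

Definition Delta (R : realType) (m : nat) (b : R) (u : vertex m -> R)
    (x : vertex m) : R :=
  match x with
  | [::] => (m%:R)^-1 * (\sum_(i < m) u (rcons x i)) - u x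
  | _ => (b * u (parent x) + (1 - b) / m%:R * (\sum_(i < m) u (rcons x i))
          - u x) * (pbeta b) ^- (size x)
  end.

Definition is_branch (m : nat) (X : nat -> vertex m) : Prop :=
  X 0%N = [::] /\ forall n, exists i : 'I_m, X n.+1 = rcons (X n) i.

Definition is_eigenvalue (R : realType) (m : nat) (b : R) (lam : R) : Prop :=
  exists u : vertex m -> R,
    (exists M : R, forall x, `|u x| <= M) /\
    (exists x, u x != 0) /\
    (forall x, - Delta b u x = lam * u x) /\
    (forall X : nat -> vertex m, is_branch X ->
       ((fun n => u (X n)) : R^nat) @ \oo --> 0).

Definition A_beta (R : realType) (m : nat) (b : R) : set R :=
  [set lam | 0 < lam /\
    exists (v : vertex m -> R) (c C : R), 0 < c /\ c < C /\
      (forall x, c < v x < C) /\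
      (forall x, Delta b v x + lam * v x <= 0)].

From mathcomp Require Import all_boot all_order all_algebra.
From mathcomp Require Import all_classical all_reals all_analysis.
From mathcomp Require Import ring lra.
Set Implicit Arguments.
Unset Strict Implicit.
Unset Printing Implicit Defensive.

Import Order.TTheory GRing.Theory Num.Theory.
Local Open Scope classical_set_scope.
Local Open Scope ring_scope.

(* Suppose lam < theta and u is a decaying eigenfunction that is positive
   somewhere.  Compare u with the positive supersolution v through the ratio
   w = u / v.  A maximum principle for Delta_beta (whose off-diagonal
   coefficients are nonnegative) shows that w cannot be maximal among the
   neighbours of a vertex where u > 0: otherwise -lam u = Delta u <= w Delta v
   <= -theta u.  Starting from the first vertex where u becomes positive, one
   can therefore always step to a child with a larger ratio, which produces a
   branch along which u >= w(start) * inf v > 0, contradicting the decay of u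
   along branches.  Applying this to u and -u gives u = 0. *)

Lemma parent_rcons (m : nat) (y : vertex m) (i : 'I_m) : parent (rcons y i) = y.
Proof. by rewrite /parent size_rcons /= -cats1 take_size_cat. Qed.

Section MaximumPrinciple.

Variables (R : realType) (m : nat) (b : R).
Hypotheses (b_ge0 : 0 <= b) (b_le1 : b <= 1).

Lemma DeltaB (u v : vertex m -> R) (t : R) (x : vertex m) :
  Delta b (fun z => u z - t * v z) x = Delta b u x - t * Delta b v x.
Proof. by case: x => [|a y]; rewrite /Delta sumrB -mulr_sumr; ring. Qed.

Lemma DeltaN (u : vertex m -> R) (x : vertex m) :
  Delta b (fun z => - u z) x = - Delta b u x.
Proof. by case: x => [|a y]; rewrite /Delta sumrN; ring. Qed.

Lemma Delta_le0_at_max (f : vertex m -> R) (y : vertex m) :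
  f y = 0 -> (y != [::] -> f (parent y) <= 0) ->
  (forall i : 'I_m, f (rcons y i) <= 0) -> Delta b f y <= 0.
Proof.
move=> fy0 fpar fchild.
have sum_le0 : \sum_(i < m) f (rcons y i) <= 0.
  by rewrite -oppr_ge0 -sumrN; apply: sumr_ge0 => i _; rewrite oppr_ge0.
have m_ge0 : 0 <= (m%:R : R)^-1 by rewrite invr_ge0.
clear fchild; case: y fy0 fpar sum_le0 => [|a y] fy0 fpar sum_le0; rewrite /Delta fy0.
  by rewrite subr0 mulr_ge0_le0.
have P_ge0 : 0 <= pbeta b ^- size (a :: y).
  by rewrite invr_ge0 exprn_ge0 // divr_ge0 // subr_ge0.
have par_le0 : b * f (parent (a :: y)) <= 0 by rewrite mulr_ge0_le0 // fpar.
have sum_term_le0 : (1 - b) / m%:R * \sum_(i < m) f (rcons (a :: y) i) <= 0.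
  by rewrite mulr_ge0_le0 // mulr_ge0 // subr_ge0.
rewrite subr0 mulr_le0_ge0 //; lra.
Qed.

Lemma eigenvalue_ge_at_ratio_max (lam theta : R) (u v : vertex m -> R)
    (y : vertex m) :
  (forall x, 0 < v x) ->
  (forall x, - Delta b u x = lam * u x) ->
  (forall x, Delta b v x + theta * v x <= 0) ->
  0 < u y ->
  (y != [::] -> u (parent y) / v (parent y) <= u y / v y) ->
  (forall i : 'I_m, u (rcons y i) / v (rcons y i) <= u y / v y) ->
  theta <= lam.
Proof.
move=> v_gt0 Eu Ev uy_gt0 par_le child_le.
set t := u y / v y.
have le_tv z : u z / v z <= t -> u z - t * v z <= 0.
  by rewrite subr_le0 ler_pdivrMr // mulrC.
have uyE : u y = t * v y by rewrite /t mulrAC -mulrA divff ?mulr1 // gt_eqF.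
have t_gt0 : 0 < t by rewrite divr_gt0.
have Du_le : Delta b u y <= t * Delta b v y.
  rewrite -subr_le0 -DeltaB; apply: Delta_le0_at_max.
  - by rewrite uyE subrr.
  - by move=> /par_le /le_tv.
  - by move=> i; apply: le_tv.
have Evt : t * Delta b v y <= t * (- theta * v y).
  by rewrite ler_pM2l //; have := Ev y; lra.
have := Eu y; rewrite uyE => Euy.
have : theta * (t * v y) <= lam * (t * v y).
  have -> : theta * (t * v y) = - (t * (- theta * v y)) by ring.
  lra.
by rewrite ler_pM2r // mulr_gt0.
Qed.

End MaximumPrinciple.

Lemma branch_through (m : nat) (y0 : vertex m) (f : vertex m -> vertex m) :
  (forall y, exists i : 'I_m, f y = rcons y i) ->
  exists X : nat -> vertex m,
    is_branch X /\ forall k, X (size y0 + k)%N = iter k f y0.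
Proof.
move=> f_child; have [i0 _] := f_child [::].
pose X n := if (n <= size y0)%N then take n y0 else iter (n - size y0) f y0.
have X_tail k : X (size y0 + k)%N = iter k f y0.
  rewrite /X addnC addnK; case: k => [|k]; first by rewrite leqnn take_size.
  by rewrite addSn ltnNge leq_addl.
exists X; split=> //; split=> [|n]; first by rewrite /X take0.
have [lt_n|le_n] := ltnP n (size y0).
  exists (nth i0 y0 n); rewrite /X lt_n (ltnW lt_n).
  exact: take_nth.
have [k ->] : exists k, n = (size y0 + k)%N by exists (n - size y0)%N; rewrite subnKC.
by rewrite -addnS !X_tail iterS; apply: f_child.
Qed.

Section DecayingEigenfunctions.

Variables (R : realType) (m : nat) (b lam theta c : R) (u v : vertex m -> R).
Hypotheses (b_ge0 : 0 <= b) (b_le1 : b <= 1) (lt_lam_theta : lam < theta).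
Hypotheses (c_gt0 : 0 < c) (v_gt_c : forall x, c < v x).
Hypothesis Eu : forall x, - Delta b u x = lam * u x.
Hypothesis Ev : forall x, Delta b v x + theta * v x <= 0.
Hypothesis u_decays : forall X : nat -> vertex m, is_branch X ->
  ((fun n => u (X n)) : R^nat) @ \oo --> 0.

Let v_gt0 x : 0 < v x. Proof. exact: lt_trans (v_gt_c x). Qed.

Let w x := u x / v x.

Let ascending y := 0 < u y /\ (y != [::] -> w (parent y) <= w y).

Let u_gt0_of_w z : 0 < w z -> 0 < u z.
Proof. by rewrite /w pmulr_lgt0 // invr_gt0. Qed.

Lemma ascending_child y :
  ascending y -> exists i : 'I_m, w y < w (rcons y i) /\ ascending (rcons y i).
Proof.
move=> [uy_gt0 par_le].
have [[i lt_i]|no_i] := pselect (exists i : 'I_m, w y < w (rcons y i)).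
  have wy_gt0 : 0 < w y by rewrite divr_gt0.
  exists i; split=> //; split; first exact/u_gt0_of_w/(lt_trans wy_gt0).
  by rewrite parent_rcons => _; apply: ltW.
exfalso; move: lt_lam_theta; rewrite ltNge => /negP; apply.
apply: (eigenvalue_ge_at_ratio_max b_ge0 b_le1 v_gt0 Eu Ev uy_gt0 par_le).
by move=> i; rewrite leNgt; apply/negP => lt_i; apply: no_i; exists i.
Qed.

Lemma exists_ascending (x : vertex m) : 0 < u x -> exists y, ascending y.
Proof.
move=> ux_gt0.
have : exists n, 0 < u (take n x) by exists (size x); rewrite take_size.
case/ex_minnP=> n un_gt0 n_min; exists (take n x); split=> //.
case: n un_gt0 n_min => [|n] un_gt0 n_min; first by rewrite take0.
have lt_n : (n < size x)%N.
  rewrite ltnNge; apply/negP => /take_oversize take_x.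
  by have := n_min n; rewrite take_x ltnn => /(_ ux_gt0).
move=> _; rewrite /parent size_takel // take_takel //=.
have : ~~ (0 < u (take n x)) by apply/negP => /n_min; rewrite ltnn.
rewrite -leNgt => u_le0; apply: (@le_trans _ _ 0); last first.
  by rewrite divr_ge0 // ltW.
by rewrite /w pmulr_lle0 // invr_gt0.
Qed.

Lemma decaying_eigenfunction_le0 x : u x <= 0.
Proof.
rewrite leNgt; apply/negP => /exists_ascending [y0 asc_y0].
have [i0 _] := ascending_child asc_y0.
have step y : exists z : vertex m, (exists i : 'I_m, z = rcons y i) /\
    (ascending y -> w y <= w z /\ ascending z).
  have [asc_y|nasc_y] := pselect (ascending y).
    have [i [/ltW le_i asc_i]] := ascending_child asc_y.
    by exists (rcons y i); split=> //; exists i.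
  by exists (rcons y i0); split=> //; exists i0.
have [f f_prop] := choice step.
have [X [X_branch X_tail]] := branch_through y0 (fun y => (f_prop y).1).
have iter_asc k : ascending (iter k f y0) /\ w y0 <= w (iter k f y0).
  elim: k => [|k [asc_k le_k]] //=.
  by have [le_f asc_f] := (f_prop _).2 asc_k; split=> //; apply: le_trans le_f.
have w0_gt0 : 0 < w y0 by rewrite divr_gt0 //; case: asc_y0.
have u_lb n : (size y0 <= n)%N -> w y0 * c <= u (X n).
  move=> /subnKC <-; rewrite X_tail.
  have [_ le_w] := iter_asc (n - size y0)%N; set z := iter _ f y0 in le_w *.
  have -> : u z = w z * v z by rewrite /w mulrAC -mulrA divff ?mulr1 // gt_eqF.
  by apply: ler_pM; rewrite ?(ltW w0_gt0) ?(ltW c_gt0) ?(ltW (v_gt_c z)).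
have : w y0 * c <= 0.
  apply: (cvgr_to_ge (u_decays X_branch)).
  exact: filterS u_lb (nbhs_infty_ge _).
by rewrite leNgt mulr_gt0.
Qed.

End DecayingEigenfunctions.

Theorem lemma5p2 (R : realType) (m : nat) (b lam theta : R) :
  (2 <= m)%N -> 0 < b -> b < 1 / 2 ->
  is_eigenvalue m b lam -> A_beta m b theta ->
  theta <= lam.
Proof.
move=> _ b_gt0 b_lt_half [u [_ [[x ux_neq0] [Eu u_decays]]]].
move=> [_ [v [c [C [c_gt0 [_ [v_bounds Ev]]]]]]].
rewrite leNgt; apply/negP => lt_lam_theta.
have b_le1 : b <= 1 by lra.
have v_gt_c y : c < v y by case/andP: (v_bounds y).
have u_le0 : u x <= 0.
  exact: (decaying_eigenfunction_le0 (ltW b_gt0) b_le1 lt_lam_theta c_gt0 v_gt_c Eu Ev u_decays).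
have Nu_le0 : - u x <= 0.
  apply: (decaying_eigenfunction_le0 (u := fun y => - u y) (ltW b_gt0) b_le1
    lt_lam_theta c_gt0 v_gt_c _ Ev).
  - by move=> y; rewrite DeltaN opprK mulrN -Eu opprK.
  - by move=> X /u_decays u_cvg; rewrite -oppr0; apply: cvgN.
by move: ux_neq0; rewrite eq_le u_le0 -oppr_le0 Nu_le0.
Qed.
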